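(* For each fixed $x\in\mathcal X$, as $\mu\ge 0$ increases: (1) $p_{C^\mu(x)}(x)$ is non-decreasing; (2) $w(C^\mu(x))\,p_{C^\mu(x)}(x)$ is non-increasing; (3) $D^\mu(x)$ is non-increasing; (4) $w(C^\mu(x))\,p_{C^\mu(x)}(x)\,D^\mu(x)$ is non-increasing; (5) $(1-p_{C^\mu(x)}(x)-\alpha)D^\mu(x)$ is non-increasing.
   Context: Let $(X,Y)\sim P_{XY}$ on $\mathcal X\times\mathcal Y$, $\alpha\in(0,1)$. $\mathcal I$ is a finite collection of subsets of $\mathcal Y$ enumerated in a fixed lexicographic order, $w:\mathcal I\to(0,B)$ a bounded positive weight. For $C\in\mathcal I$ let $p_C(x)=\mathbb P(Y\in C\mid X=x)$, $\ell_{x,C}(\mu)=w(C)p_C(x)+\mu(p_C(x)-(1-\alpha))$ for $\mu\ge0$, $\mathcal U_x(\mu)=\max_{C\in\mathcal I}\ell_{x,C}(\mu)$. $C^\mu(x)$ is a maximizer of $\ell_{x,C}(\mu)$ over $C\in\mathcal I$, ties broken in favor of the largest $w(C)$ and then the smallest index; $D^\mu(x)=\mathbb 1\{\mathcal U_x(\mu)\ge 0\}$. *)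

From HB Require Import structures.
From mathcomp Require Import all_boot all_order all_algebra.
From mathcomp Require Import all_classical all_reals all_analysis.
Set Implicit Arguments. Unset Strict Implicit. Unset Printing Implicit Defensive.
Import Order.TTheory GRing.Theory Num.Theory.
Local Open Scope ring_scope.

(* PYgX x is (a version of) the conditional law of Y given X = x, a
   probability measure on Y.  The finite collection I of subsets of Y is
   Cs : 'I_n.+1 -> set Y (nonempty, enumerated in the fixed order of the
   indices), w : 'I_n.+1 -> R is the weight of each set. *)

Section Defs.
Context (d : measure_display) (Y : measurableType d) (R : realType) (X : Type).
Context (PYgX : X -> probability Y R) (n : nat) (Cs : 'I_n.+1 -> set Y)
        (w : 'I_n.+1 -> R) (alpha : R).

Definition pC (x : X) (i : 'I_n.+1) : R := fine (PYgX x (Cs i)).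

Definition ell (x : X) (i : 'I_n.+1) (mu : R) : R :=
  w i * pC x i + mu * (pC x i - (1 - alpha)).

Definition Ux (x : X) (mu : R) : R :=
  \big[Num.max/ell x ord0 mu]_(i < n.+1) ell x i mu.

Definition is_Cmu (x : X) (mu : R) (i : 'I_n.+1) : Prop :=
  [/\ forall j, ell x j mu <= ell x i mu,
      forall j, ell x j mu = ell x i mu -> w j <= w i
    & forall j, ell x j mu = ell x i mu -> w j = w i -> (i <= j)%N].

Definition Dmu (x : X) (mu : R) : R := if 0 <= Ux x mu then 1 else 0.

End Defs.

From HB Require Import structures.
From mathcomp Require Import all_boot all_order all_algebra.
From mathcomp Require Import all_classical all_reals all_analysis.
From mathcomp Require Import lra.
Set Implicit Arguments. Unset Strict Implicit. Unset Printing Implicit Defensive.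
Import Order.TTheory GRing.Theory Num.Theory.
Local Open Scope ring_scope.

(* Each score [ell x C mu] is affine in [mu], with intercept [w(C) p_C(x) >= 0]
   and slope [p_C(x) - (1 - alpha)].  Comparing the optimality of [C^mu1] at
   [mu1] with that of [C^mu2] at [mu2] forces the slope of the maximizer to
   grow with [mu] (single crossing; for [mu1 = mu2] the tie-breaking rule
   makes the maximizer unique) and then its intercept to shrink.  An
   affine function that is nonnegative at [0] and at [mu2] is nonnegative on
   [[0, mu2]], so [U_x(mu) >= 0] propagates downwards, and when [U_x(mu) < 0]
   every slope is negative. *)

Section AffineFamilies.
Variable R : realDomainType.
Implicit Types a b mu : R.

Lemma crossing_slope_le a1 b1 a2 b2 mu1 mu2 : mu1 < mu2 ->
  a2 + mu1 * b2 <= a1 + mu1 * b1 -> a1 + mu2 * b1 <= a2 + mu2 * b2 ->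
  b1 <= b2.
Proof. by move=> *; nra. Qed.

Lemma crossing_intercept_le a1 b1 a2 b2 mu : 0 <= mu -> b1 <= b2 ->
  a2 + mu * b2 <= a1 + mu * b1 -> a2 <= a1.
Proof. by move=> *; nra. Qed.

Lemma affine_ge0_between a b mu1 mu2 : 0 <= a -> 0 <= mu1 -> mu1 <= mu2 ->
  0 <= a + mu2 * b -> 0 <= a + mu1 * b.
Proof. by move=> a_ge0 mu1_ge0 le_mu; case: (lerP 0 b) => b_sgn; nra. Qed.

Lemma affine_lt0_slope_lt0 a b mu : 0 <= a -> 0 <= mu -> a + mu * b < 0 ->
  b < 0.
Proof. by move=> *; nra. Qed.

End AffineFamilies.

Section MonotoneMaximizer.
Variables (d : measure_display) (Y : measurableType d) (R : realType) (X : Type).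
Variables (PYgX : X -> probability Y R) (n : nat) (Cs : 'I_n.+1 -> set Y).
Variables (w : 'I_n.+1 -> R) (alpha : R) (x : X).
Hypothesis w_ge0 : forall i, 0 <= w i.

Local Notation p := (pC PYgX Cs x).
Local Notation l := (ell PYgX Cs w alpha x).
Local Notation U := (Ux PYgX Cs w alpha x).
Local Notation D := (Dmu PYgX Cs w alpha x).
Local Notation Cmu := (is_Cmu PYgX Cs w alpha x).

Lemma pC_ge0 i : 0 <= p i.
Proof. by rewrite fine_ge0 // measure_ge0. Qed.

Lemma intercept_ge0 i : 0 <= w i * p i.
Proof. by rewrite mulr_ge0 ?pC_ge0. Qed.

Lemma ell_le_Ux mu i : l i mu <= U mu.
Proof. exact: le_bigmax. Qed.

Lemma Ux_attained mu : exists i, U mu = l i mu.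
Proof.
rewrite /Ux; elim/big_ind: _ => [|_ _ [i ->] [j ->]|i _]; first by exists ord0.
  by rewrite maxEle; case: ifP; [exists j | exists i].
by exists i.
Qed.

Lemma Ux_Cmu mu i : Cmu mu i -> U mu = l i mu.
Proof.
case=> l_max _ _; apply: le_anti; rewrite ell_le_Ux andbT.
by apply: bigmax_le => // j _; apply: l_max.
Qed.

Lemma Cmu_uniq mu i j : Cmu mu i -> Cmu mu j -> i = j.
Proof.
move=> [li_max wi_max i_min] [lj_max wj_max j_min].
have l_eq : l j mu = l i mu by apply: le_anti; rewrite li_max lj_max.
have w_eq : w j = w i by apply: le_anti; rewrite wi_max // wj_max.
by apply: val_inj; apply: anti_leq; rewrite i_min // j_min.
Qed.

Lemma pC_Cmu_monotone mu1 mu2 i1 i2 : mu1 <= mu2 ->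
  Cmu mu1 i1 -> Cmu mu2 i2 -> p i1 <= p i2.
Proof.
rewrite le_eqVlt => /predU1P[<- C1 C2|lt_mu [l1_max _ _] [l2_max _ _]].
  by rewrite (Cmu_uniq C1 C2).
rewrite -(lerD2r (- (1 - alpha))).
exact: crossing_slope_le lt_mu (l1_max i2) (l2_max i1).
Qed.

Lemma score_Cmu_antitone mu1 mu2 i1 i2 : 0 <= mu1 -> mu1 <= mu2 ->
  Cmu mu1 i1 -> Cmu mu2 i2 -> w i2 * p i2 <= w i1 * p i1.
Proof.
move=> mu1_ge0 le_mu C1 C2; have [l1_max _ _] := C1.
have p_le := pC_Cmu_monotone le_mu C1 C2.
by apply: crossing_intercept_le mu1_ge0 _ (l1_max i2); rewrite lerD2r.
Qed.

Lemma Ux_ge0_antitone mu1 mu2 : 0 <= mu1 -> mu1 <= mu2 ->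
  0 <= U mu2 -> 0 <= U mu1.
Proof.
move=> mu1_ge0 le_mu; have [i ->] := Ux_attained mu2 => li_ge0.
apply: le_trans (ell_le_Ux mu1 i).
exact: affine_ge0_between (intercept_ge0 i) mu1_ge0 le_mu li_ge0.
Qed.

Lemma Dmu_ge0 mu : 0 <= D mu.
Proof. by rewrite /Dmu; case: ifP. Qed.

Lemma Dmu_antitone mu1 mu2 : 0 <= mu1 -> mu1 <= mu2 -> D mu2 <= D mu1.
Proof.
move=> mu1_ge0 le_mu; rewrite {1}/Dmu; case: ifP => [U2_ge0|_]; last exact: Dmu_ge0.
by rewrite /Dmu (Ux_ge0_antitone mu1_ge0 le_mu U2_ge0).
Qed.

Lemma pC_lt_Ux_lt0 mu i : 0 <= mu -> U mu < 0 -> p i < 1 - alpha.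
Proof.
move=> mu_ge0 U_lt0; rewrite -subr_lt0.
exact: affine_lt0_slope_lt0 (intercept_ge0 i) mu_ge0 (le_lt_trans (ell_le_Ux mu i) U_lt0).
Qed.

Lemma margin_Dmu_antitone mu1 mu2 i1 i2 : 0 <= mu1 -> mu1 <= mu2 ->
  Cmu mu1 i1 -> Cmu mu2 i2 ->
  (1 - p i2 - alpha) * D mu2 <= (1 - p i1 - alpha) * D mu1.
Proof.
move=> mu1_ge0 le_mu C1 C2; rewrite {1}/Dmu; case: (lerP 0 (U mu2)) => [U2_ge0|U2_lt0].
  rewrite /Dmu (Ux_ge0_antitone mu1_ge0 le_mu U2_ge0) !mulr1.
  by rewrite lerB // lerB // (pC_Cmu_monotone le_mu C1 C2).
rewrite mulr0 mulr_ge0 ?Dmu_ge0 //.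
by have := pC_lt_Ux_lt0 i1 (le_trans mu1_ge0 le_mu) U2_lt0; lra.
Qed.

End MonotoneMaximizer.

Theorem proposition2 (d : measure_display) (Y : measurableType d)
  (R : realType) (X : Type) (PYgX : X -> probability Y R)
  (n : nat) (Cs : 'I_n.+1 -> set Y) (w : 'I_n.+1 -> R) (B alpha : R) :
  0 < alpha < 1 ->
  (forall i, measurable (Cs i)) ->
  injective Cs ->
  (forall i, 0 < w i < B) ->
  forall (x : X) (mu1 mu2 : R) (i1 i2 : 'I_n.+1),
  0 <= mu1 -> mu1 <= mu2 ->
  is_Cmu PYgX Cs w alpha x mu1 i1 ->
  is_Cmu PYgX Cs w alpha x mu2 i2 ->
  [/\ pC PYgX Cs x i1 <= pC PYgX Cs x i2,
      w i2 * pC PYgX Cs x i2 <= w i1 * pC PYgX Cs x i1,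
      Dmu PYgX Cs w alpha x mu2 <= Dmu PYgX Cs w alpha x mu1,
      w i2 * pC PYgX Cs x i2 * Dmu PYgX Cs w alpha x mu2
        <= w i1 * pC PYgX Cs x i1 * Dmu PYgX Cs w alpha x mu1
    & (1 - pC PYgX Cs x i2 - alpha) * Dmu PYgX Cs w alpha x mu2
        <= (1 - pC PYgX Cs x i1 - alpha) * Dmu PYgX Cs w alpha x mu1].
Proof.
move=> _ _ _ w_bounds x mu1 mu2 i1 i2 mu1_ge0 le_mu C1 C2.
have w_ge0 i : 0 <= w i by case/andP: (w_bounds i) => /ltW.
have score_le := score_Cmu_antitone mu1_ge0 le_mu C1 C2.
split => //.
- exact: pC_Cmu_monotone le_mu C1 C2.
- by apply: Dmu_antitone.
- by rewrite ler_pM ?Dmu_ge0 //; [apply: intercept_ge0 | apply: Dmu_antitone].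
- by apply: margin_Dmu_antitone C1 C2.
Qed.
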